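(* Let $K$ be a field, $A$ a cocommutative Hopf algebra over $K$ with antipode $S$, and $X,Y$ normal Hopf subalgebras of $A$. Let $[X,Y]$ be the subalgebra of $A$ generated by all elements $\{a,b\}=a_1b_1S(a_2)S(b_2)$ with $a\in X$, $b\in Y$. Then $[X,Y]$ is a normal Hopf subalgebra of $A$.
   Context: Sweedler notation $\Delta(a)=a_1\otimes a_2$. A Hopf subalgebra $D$ of $A$ is normal if $a_1dS(a_2)\in D$ for all $a\in A$, $d\in D$. *)

(* The tensor product A (x) A is not available, so an element of A (x) A is
   represented by a finite list of pairs (a Sweedler representative) and two
   representatives are identified exactly when they are identified in the
   tensor product, i.e. via the universal property: every bilinear map into
   every K-vector space takes the same value on them. Likewise for A(x)A(x)A. *)
From HB Require Import structures.
From mathcomp Require Import all_boot all_order all_algebra.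
Set Implicit Arguments. Unset Strict Implicit. Unset Printing Implicit Defensive.
Import GRing.Theory.
Local Open Scope ring_scope.

Section Hopf.
Variables (K : fieldType) (A : algType K).

Definition bilin (V : lmodType K) (f : A -> A -> V) : Prop :=
  (forall (k : K) x x' y, f (k *: x + x') y = k *: f x y + f x' y) /\
  (forall (k : K) x y y', f x (k *: y + y') = k *: f x y + f x y').

Definition trilin (V : lmodType K) (f : A -> A -> A -> V) : Prop :=
  (forall (k : K) x x' y z, f (k *: x + x') y z = k *: f x y z + f x' y z) /\
  (forall (k : K) x y y' z, f x (k *: y + y') z = k *: f x y z + f x y' z) /\
  (forall (k : K) x y z z', f x y (k *: z + z') = k *: f x y z + f x y z').

Definition teq2 (s t : seq (A * A)) : Prop :=
  forall (V : lmodType K) (f : A -> A -> V), bilin f ->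
    \sum_(p <- s) f p.1 p.2 = \sum_(p <- t) f p.1 p.2.

Definition teq3 (s t : seq (A * A * A)) : Prop :=
  forall (V : lmodType K) (f : A -> A -> A -> V), trilin f ->
    \sum_(p <- s) f p.1.1 p.1.2 p.2 = \sum_(p <- t) f p.1.1 p.1.2 p.2.

Definition is_hopf (Delta : A -> seq (A * A)) (eps : A -> K) (S : A -> A) : Prop :=
  (forall (k : K) a b,
     teq2 (Delta (k *: a + b)) ([seq (k *: p.1, p.2) | p <- Delta a] ++ Delta b)) /\
  (forall a, teq3 [seq (p.1, q.1, q.2) | p <- Delta a, q <- Delta p.2]
                  [seq (q.1, q.2, p.2) | p <- Delta a, q <- Delta p.1]) /\
  (forall (k : K) a b, eps (k *: a + b) = k * eps a + eps b) /\
  (forall a, \sum_(p <- Delta a) eps p.1 *: p.2 = a) /\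
  (forall a, \sum_(p <- Delta a) eps p.2 *: p.1 = a) /\
  (forall a b, teq2 (Delta (a * b))
                    [seq (p.1 * q.1, p.2 * q.2) | p <- Delta a, q <- Delta b]) /\
  teq2 (Delta 1) [:: (1, 1)] /\
  (forall a b, eps (a * b) = eps a * eps b) /\
  eps 1 = 1 /\
  (forall (k : K) a b, S (k *: a + b) = k *: S a + S b) /\
  (forall a, \sum_(p <- Delta a) S p.1 * p.2 = eps a *: 1) /\
  (forall a, \sum_(p <- Delta a) p.1 * S p.2 = eps a *: 1).

Definition cocommutative (Delta : A -> seq (A * A)) : Prop :=
  forall a, teq2 (Delta a) [seq (p.2, p.1) | p <- Delta a].

Definition is_subalg (P : A -> Prop) : Prop :=
  P 0 /\ (forall (k : K) x y, P x -> P y -> P (k *: x + y)) /\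
  P 1 /\ (forall x y, P x -> P y -> P (x * y)).

Definition is_hopf_sub (Delta : A -> seq (A * A)) (S : A -> A) (D : A -> Prop) : Prop :=
  is_subalg D /\
  (forall d, D d -> exists s : seq (A * A),
       (forall p, p \in s -> D p.1 /\ D p.2) /\ teq2 (Delta d) s) /\
  (forall d, D d -> D (S d)).

Definition is_normal_hopf_sub (Delta : A -> seq (A * A)) (S : A -> A) (D : A -> Prop) : Prop :=
  is_hopf_sub Delta S D /\
  (forall a d, D d -> D (\sum_(p <- Delta a) p.1 * d * S p.2)).

Definition hbr (Delta : A -> seq (A * A)) (S : A -> A) (a b : A) : A :=
  \sum_(p <- Delta a) \sum_(q <- Delta b) p.1 * q.1 * S p.2 * S q.2.

Definition gen_subalg (G : A -> Prop) : A -> Prop :=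
  fun x => forall P, is_subalg P -> (forall g, G g -> P g) -> P x.

Definition hcomm (Delta : A -> seq (A * A)) (S : A -> A) (X Y : A -> Prop) : A -> Prop :=
  gen_subalg (fun g => exists a b, X a /\ Y b /\ g = hbr Delta S a b).

End Hopf.

(* In Sweedler notation, with a cocommutative coproduct the iterated coproduct
   a1 (x) a2 (x) ... (x) an is symmetric in its legs.  This makes the adjoint
   action ad a z = a1 z S(a2) multiplicative and compatible with S and with the
   coproduct, and gives the three identities on generators
     ad a {x, y} = {ad a1 x, ad a2 y},   S {x, y} = ad x2 {S x1, y},
     Delta {a, b} = {a1, b1} (x) {a2, b2}.
   Since ad a is multiplicative, S anti-multiplicative and Delta multiplicative,
   closure of [X, Y] under ad a, under S and under Delta propagates from the
   generators to the whole subalgebra they generate. *)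

From HB Require Import structures.
From mathcomp Require Import all_boot all_order all_algebra.
Set Implicit Arguments. Unset Strict Implicit. Unset Printing Implicit Defensive.
Import GRing.Theory.
Local Open Scope ring_scope.

Section Multilinear.
Variables (K : fieldType) (A : algType K).

Lemma linear_id : linear (fun x : A => x). Proof. by []. Qed.

Lemma linear_mull (c : A) : linear (fun x : A => c * x).
Proof. by move=> k x y; rewrite mulrDr scalerAr. Qed.

Lemma linear_mulr (c : A) : linear (fun x : A => x * c).
Proof. by move=> k x y; rewrite mulrDl scalerAl. Qed.

Variable V : lmodType K.

Definition linear2 (F : A -> A -> V) :=
  (forall y, linear (F^~ y)) /\ (forall x, linear (F x)).
Definition linear3 (F : A -> A -> A -> V) :=
  [/\ forall y z, linear (fun x => F x y z), forall x z, linear (fun y => F x y z)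
    & forall x y, linear (F x y)].
Definition linear4 (F : A -> A -> A -> A -> V) :=
  [/\ forall y z w, linear (fun x => F x y z w), forall x z w, linear (fun y => F x y z w),
      forall x y w, linear (fun z => F x y z w) & forall x y z, linear (F x y z)].

Lemma bilinP (F : A -> A -> V) : bilin F <-> linear2 F.
Proof.
split=> [[F1 F2]|[F1 F2]].
  by split=> [y k x x'|x k y y']; [apply: F1 | apply: F2].
by split=> [k x x' y|k x y y']; [apply: F1 | apply: F2].
Qed.

Lemma linear3_trilin (F : A -> A -> A -> V) : linear3 F -> trilin F.
Proof.
by case=> F1 F2 F3; split; [|split] => k x x' y z; [apply: F1 | apply: F2 | apply: F3].
Qed.

Definition Linear_of (g : A -> V) (g_lin : linear g) : {linear A -> V} :=
  HB.pack g (GRing.isLinear.Build _ _ _ _ g g_lin).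

Lemma linear_sum_of (g : A -> V) (I : Type) (s : seq I) (F : I -> A) :
  linear g -> g (\sum_(i <- s) F i) = \sum_(i <- s) g (F i).
Proof. by move=> g_lin; exact: (raddf_sum (Linear_of g_lin)). Qed.

Lemma linear0_of (g : A -> V) : linear g -> g 0 = 0.
Proof. by move=> g_lin; exact: (raddf0 (Linear_of g_lin)). Qed.

Lemma linear_comp (h : A -> V) (g : A -> A) :
  linear h -> linear g -> linear (fun x => h (g x)).
Proof. by move=> h_lin g_lin k x y; rewrite g_lin h_lin. Qed.

Lemma linear_sumf (I : Type) (s : seq I) (G : A -> I -> V) :
  (forall i, linear (G^~ i)) -> linear (fun x => \sum_(i <- s) G x i).
Proof.
move=> G_lin k x y; rewrite scaler_sumr -big_split /=.
by apply: eq_bigr => i _; rewrite G_lin.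
Qed.

End Multilinear.

Section Subalgebra.
Variables (K : fieldType) (A : algType K).

Section Closure.
Variable P : A -> Prop.
Hypothesis P_subalg : is_subalg P.

Lemma subalg0 : P 0. Proof. by case: P_subalg. Qed.

Lemma subalgZD k x y : P x -> P y -> P (k *: x + y).
Proof. by case: P_subalg => _ [PZD _]; apply: PZD. Qed.

Lemma subalg1 : P 1. Proof. by case: P_subalg => _ [_ []]. Qed.

Lemma subalgM x y : P x -> P y -> P (x * y).
Proof. by case: P_subalg => _ [_ [_ PM]]; apply: PM. Qed.

Lemma subalgZ k x : P x -> P (k *: x).
Proof. by move=> Px; rewrite -[_ *: _]addr0; apply: subalgZD => //; apply: subalg0. Qed.

Lemma subalg_sum (I : eqType) (s : seq I) (F : I -> A) :
  (forall i, i \in s -> P (F i)) -> P (\sum_(i <- s) F i).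
Proof.
elim: s => [|i s IHs] PF; first by rewrite big_nil; apply: subalg0.
rewrite big_cons -[F i]scale1r; apply: subalgZD; first by apply: PF; rewrite mem_head.
by apply: IHs => j js; apply: PF; rewrite in_cons js orbT.
Qed.

End Closure.

Lemma gen_subalg_subalg (G : A -> Prop) : is_subalg (gen_subalg G).
Proof.
split; [|split; [|split]].
- by move=> P P_subalg _; apply: subalg0.
- by move=> k x y Gx Gy P P_subalg PG; apply: subalgZD => //; [apply: Gx | apply: Gy].
- by move=> P P_subalg _; apply: subalg1.
- by move=> x y Gx Gy P P_subalg PG; apply: subalgM => //; [apply: Gx | apply: Gy].
Qed.

Lemma gen_subalg_gen (G : A -> Prop) g : G g -> gen_subalg G g.
Proof. by move=> Gg P _ PG; apply: PG. Qed.

End Subalgebra.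

Section HopfAlgebra.
Variables (K : fieldType) (A : algType K) (Delta : A -> seq (A * A)).

(** * Sweedler sums *)

(* Depends on the chosen representative Delta a of the coproduct unless F is
   bilinear, whence the linearity side conditions throughout. *)
Definition sweedler (V : lmodType K) (a : A) (F : A -> A -> V) : V :=
  \sum_(p <- Delta a) F p.1 p.2.

Local Notation "'Σ' ( x ⊗ y <- a ) F" := (sweedler a (fun x y => F))
  (at level 41, F at level 41, x name, y name,
   format "'[' Σ ( x  ⊗  y  <-  a ) '/  '  F ']'").
Local Notation "'Σ' ( x ⊗ y ⊗ z <- a ) F" :=
  (sweedler a (fun x w => sweedler w (fun y z => F)))
  (at level 41, F at level 41, x name, y name, z name,
   format "'[' Σ ( x  ⊗  y  ⊗  z  <-  a ) '/  '  F ']'").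
Local Notation "'Σ' ( x ⊗ y ⊗ z ⊗ t <- a ) F" :=
  (sweedler a (fun x w => sweedler w (fun y w' => sweedler w' (fun z t => F))))
  (at level 41, F at level 41, x name, y name, z name, t name,
   format "'[' Σ ( x  ⊗  y  ⊗  z  ⊗  t  <-  a ) '/  '  F ']'").

Section SweedlerSum.
Variable V : lmodType K.
Implicit Types (a b : A) (F G : A -> A -> V).

Lemma eq_sweedler a F G :
  (forall x y, F x y = G x y) -> Σ(x ⊗ y <- a) F x y = Σ(x ⊗ y <- a) G x y.
Proof. by move=> FG; apply: eq_bigr => p _; apply: FG. Qed.

Lemma exchange_sweedler a b (F : A -> A -> A -> A -> V) :
  Σ(x ⊗ y <- a) Σ(u ⊗ v <- b) F x y u v = Σ(u ⊗ v <- b) Σ(x ⊗ y <- a) F x y u v.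
Proof. exact: exchange_big. Qed.

Lemma scaler_sweedler a (k : K) F :
  k *: (Σ(x ⊗ y <- a) F x y) = Σ(x ⊗ y <- a) k *: F x y.
Proof. exact: scaler_sumr. Qed.

Lemma linear_sweedler_fun a (F : A -> A -> A -> V) :
  (forall u v, linear (fun x => F x u v)) -> linear (fun x => Σ(u ⊗ v <- a) F x u v).
Proof. by move=> F_lin; apply: linear_sumf => p; apply: F_lin. Qed.

End SweedlerSum.

Lemma linear_sweedler (W : lmodType K) a (F : A -> A -> A) (h : A -> W) :
  linear h -> h (Σ(x ⊗ y <- a) F x y) = Σ(x ⊗ y <- a) h (F x y).
Proof. exact: linear_sum_of. Qed.

Lemma mulr_sweedlerl a (F : A -> A -> A) c :
  (Σ(x ⊗ y <- a) F x y) * c = Σ(x ⊗ y <- a) F x y * c.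
Proof. exact: mulr_suml. Qed.

Lemma mulr_sweedlerr a (F : A -> A -> A) c :
  c * (Σ(x ⊗ y <- a) F x y) = Σ(x ⊗ y <- a) c * F x y.
Proof. exact: mulr_sumr. Qed.

Lemma subalg_sweedler (P : A -> Prop) a (F : A -> A -> A) :
  is_subalg P -> (forall x y, P (F x y)) -> P (Σ(x ⊗ y <- a) F x y).
Proof. by move=> P_subalg PF; apply: subalg_sum => // p _; apply: PF. Qed.

Variables (eps : A -> K) (S : A -> A).

Hypothesis Delta_linear : forall (k : K) a b,
  teq2 (Delta (k *: a + b)) ([seq (k *: p.1, p.2) | p <- Delta a] ++ Delta b).
Hypothesis eps_scalar : scalar eps.
Hypothesis S_linear : linear S.

Lemma linear_sweedler_arg (V : lmodType K) (F : A -> A -> V) :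
  linear2 F -> linear (fun a => Σ(x ⊗ y <- a) F x y).
Proof.
move=> F_lin k a b; rewrite /sweedler (Delta_linear k a b (proj2 (bilinP F) F_lin)).
rewrite big_cat big_map scaler_sumr; congr (_ + _); apply: eq_bigr => p _ /=.
exact: (scalable_linear (F_lin.1 _)).
Qed.

Lemma linear_eps_scale (V : lmodType K) (g : A -> A) (v : V) :
  linear g -> linear (fun x => eps (g x) *: v).
Proof. by move=> g_lin k x y; rewrite g_lin eps_scalar scalerDl scalerA. Qed.

Ltac linearity_atom :=
  first [ exact: S_linear | exact: linear_mull | exact: linear_mulr
        | match goal with H : _ |- _ => apply: H end ].

(* The bound variable may occur in only one argument of each application. *)
Ltac linearity :=
  cbv beta;
  first [ solve [linearity_atom] |
  match goal with
  | |- linear (fun x => x) => exact: linear_id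
  | |- linear (fun x => sweedler ?a _) => apply: linear_sweedler_fun => ? ?; linearity
  | |- linear (fun x => eps (@?g x) *: ?v) =>
        apply: (@linear_eps_scale _ g v); linearity
  | |- linear (fun x => sweedler (@?g x) ?F) =>
        apply: (@linear_comp _ _ _ (fun y => sweedler y F) g);
        [apply: linear_sweedler_arg; multilinearity | linearity]
  | |- linear (fun x => ?h (@?g x)) =>
        apply: (@linear_comp _ _ _ h g); [linearity_atom | linearity]
  | |- linear (fun x => ?h (@?g x) ?c) =>
        apply: (@linear_comp _ _ _ (fun y => h y c) g); [linearity_atom | linearity]
  end ]
with multilinearity :=
  lazymatch goal with
  | |- linear2 _ => split => ?; linearity
  | |- linear3 _ => split => ? ?; linearity
  | |- linear4 _ => split => ? ? ?; linearity
  end.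

Hypothesis coassoc : forall a,
  teq3 [seq (p.1, q.1, q.2) | p <- Delta a, q <- Delta p.2]
       [seq (q.1, q.2, p.2) | p <- Delta a, q <- Delta p.1].
Hypothesis counitl : forall a, Σ(x ⊗ y <- a) eps x *: y = a.
Hypothesis counitr : forall a, Σ(x ⊗ y <- a) eps y *: x = a.
Hypothesis DeltaM : forall a b,
  teq2 (Delta (a * b)) [seq (p.1 * q.1, p.2 * q.2) | p <- Delta a, q <- Delta b].
Hypothesis Delta1 : teq2 (Delta 1) [:: (1, 1)].
Hypothesis epsM : forall a b, eps (a * b) = eps a * eps b.
Hypothesis eps1 : eps 1 = 1.
Hypothesis antipodel : forall a, Σ(x ⊗ y <- a) S x * y = eps a *: 1.
Hypothesis antipoder : forall a, Σ(x ⊗ y <- a) x * S y = eps a *: 1.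
Hypothesis cocomm : cocommutative Delta.

Section HopfIdentities.
Variable V : lmodType K.
Implicit Types (a b : A) (F : A -> A -> V).

Lemma sweedler_teq a s F : teq2 (Delta a) s -> linear2 F ->
  Σ(x ⊗ y <- a) F x y = \sum_(p <- s) F p.1 p.2.
Proof. by move=> as_eq F_lin; apply/as_eq/bilinP. Qed.

Lemma sweedler_coassoc a (G : A -> A -> A -> V) : linear3 G ->
  Σ(x ⊗ y <- a) Σ(u ⊗ v <- x) G u v y = Σ(x ⊗ u ⊗ v <- a) G x u v.
Proof.
move=> G_lin; have := coassoc a (linear3_trilin G_lin).
by rewrite !big_allpairs_dep.
Qed.

Lemma sweedlerC a F : linear2 F -> Σ(x ⊗ y <- a) F x y = Σ(x ⊗ y <- a) F y x.
Proof. by move=> F_lin; rewrite /sweedler (cocomm a (proj2 (bilinP F) F_lin)) big_map. Qed.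

Lemma sweedler_counitl a (g : A -> V) : linear g -> Σ(x ⊗ y <- a) eps x *: g y = g a.
Proof.
move=> g_lin; rewrite -{2}[a]counitl (linear_sweedler _ _ g_lin).
by apply: eq_sweedler => x y; rewrite (scalable_linear g_lin).
Qed.

Lemma sweedler_counitr a (g : A -> V) : linear g -> Σ(x ⊗ y <- a) eps y *: g x = g a.
Proof.
move=> g_lin; rewrite -{2}[a]counitr (linear_sweedler _ _ g_lin).
by apply: eq_sweedler => x y; rewrite (scalable_linear g_lin).
Qed.

Lemma sweedlerM a b F : linear2 F ->
  Σ(x ⊗ y <- a * b) F x y = Σ(x ⊗ y <- a) Σ(u ⊗ v <- b) F (x * u) (y * v).
Proof. by move=> F_lin; rewrite (sweedler_teq (DeltaM a b)) // big_allpairs_dep. Qed.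

Lemma sweedler1 F : linear2 F -> Σ(x ⊗ y <- 1) F x y = F 1 1.
Proof. by move=> F_lin; rewrite (sweedler_teq Delta1) // big_seq1. Qed.

End HopfIdentities.

Lemma sweedler_antipodel (V : lmodType K) a (h : A -> V) :
  linear h -> Σ(x ⊗ y <- a) h (S x * y) = eps a *: h 1.
Proof. by move=> h_lin; rewrite -linear_sweedler // antipodel (scalable_linear h_lin). Qed.

Lemma sweedler_antipoder (V : lmodType K) a (h : A -> V) :
  linear h -> Σ(x ⊗ y <- a) h (x * S y) = eps a *: h 1.
Proof. by move=> h_lin; rewrite -linear_sweedler // antipoder (scalable_linear h_lin). Qed.

Section IteratedSums.
Variable V : lmodType K.

Lemma sweedler3_swap12 a (G : A -> A -> A -> V) : linear3 G ->
  Σ(x ⊗ u ⊗ v <- a) G x u v = Σ(x ⊗ u ⊗ v <- a) G u x v.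
Proof.
case=> G1 G2 G3.
rewrite -sweedler_coassoc; last by multilinearity.
rewrite -(@sweedler_coassoc _ _ (fun x u v => G u x v)); last by multilinearity.
by apply: eq_sweedler => x y; apply: sweedlerC; multilinearity.
Qed.

Lemma sweedler4_split a (G : A -> A -> A -> A -> V) : linear4 G ->
  Σ(x ⊗ y <- a) Σ(p ⊗ q <- x) Σ(r ⊗ s <- y) G p q r s =
  Σ(p ⊗ q ⊗ r ⊗ s <- a) G p q r s.
Proof.
case=> G1 G2 G3 G4.
by rewrite (@sweedler_coassoc _ _ (fun p q y => Σ(r ⊗ s <- y) G p q r s)) //; multilinearity.
Qed.

Lemma sweedler4_swap23 a (G : A -> A -> A -> A -> V) : linear4 G ->
  Σ(x ⊗ u ⊗ s ⊗ t <- a) G x u s t = Σ(x ⊗ u ⊗ s ⊗ t <- a) G x s u t.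
Proof.
case=> G1 G2 G3 G4; apply: eq_sweedler => x y.
by apply: (@sweedler3_swap12 _ (fun u s t => G x u s t)); multilinearity.
Qed.

Lemma sweedler_interchange a (G : A -> A -> A -> A -> V) : linear4 G ->
  Σ(x ⊗ y <- a) Σ(p ⊗ q <- x) Σ(r ⊗ s <- y) G p q r s =
  Σ(x ⊗ y <- a) Σ(p ⊗ q <- x) Σ(r ⊗ s <- y) G p r q s.
Proof.
move=> G_lin; have [G1 G2 G3 G4] := G_lin.
rewrite sweedler4_split // sweedler4_swap23 //.
by rewrite (@sweedler4_split _ (fun p r q s => G p q r s)) //; multilinearity.
Qed.

Lemma sweedler3_antipode23l a (H : A -> A -> V) : linear2 H ->
  Σ(x ⊗ u ⊗ v <- a) H x (S u * v) = H a 1.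
Proof.
case=> H1 H2; rewrite -(@sweedler_counitr _ a (H^~ 1)) //.
by apply: eq_sweedler => x y; apply: sweedler_antipodel.
Qed.

Lemma sweedler3_antipode23r a (H : A -> A -> V) : linear2 H ->
  Σ(x ⊗ u ⊗ v <- a) H x (u * S v) = H a 1.
Proof.
case=> H1 H2; rewrite -(@sweedler_counitr _ a (H^~ 1)) //.
by apply: eq_sweedler => x y; apply: sweedler_antipoder.
Qed.

Lemma sweedler3_antipode12l a (H : A -> A -> V) : linear2 H ->
  Σ(x ⊗ u ⊗ v <- a) H (S x * u) v = H 1 a.
Proof.
case=> H1 H2; rewrite -(@sweedler_coassoc _ _ (fun x u v => H (S x * u) v)); last first.
  by multilinearity.
rewrite -(@sweedler_counitl _ a (H 1)) //.
by apply: eq_sweedler => w v; apply: (sweedler_antipodel _ (H1 v)).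
Qed.

Lemma sweedler3_antipode12r a (H : A -> A -> V) : linear2 H ->
  Σ(x ⊗ u ⊗ v <- a) H (x * S u) v = H 1 a.
Proof.
case=> H1 H2; rewrite -(@sweedler_coassoc _ _ (fun x u v => H (x * S u) v)); last first.
  by multilinearity.
rewrite -(@sweedler_counitl _ a (H 1)) //.
by apply: eq_sweedler => w v; apply: (sweedler_antipoder _ (H1 v)).
Qed.

End IteratedSums.

(** * The antipode of a cocommutative Hopf algebra *)

Lemma antipode1 : S 1 = 1.
Proof.
have := antipodel 1; rewrite sweedler1; last by multilinearity.
by rewrite mulr1 eps1 scale1r.
Qed.

Lemma antipodeM x y : S (x * y) = S y * S x.
Proof.
have contract : Σ(x1 ⊗ x2 ⊗ x3 <- x) Σ(y1 ⊗ y2 ⊗ y3 <- y)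
    S (x1 * y1) * (x2 * y2) * (S y3 * S x3) = S (x * y).
  transitivity (Σ(x1 ⊗ x2 ⊗ x3 <- x) S (x1 * y) * (x2 * S x3)).
    apply: eq_sweedler => x1 w; apply: eq_sweedler => x2 x3.
    transitivity (Σ(y1 ⊗ y2 ⊗ y3 <- y) S (x1 * y1) * x2 * (y2 * S y3) * S x3).
      by apply: eq_sweedler => y1 v; apply: eq_sweedler => y2 y3; rewrite !mulrA.
    rewrite (@sweedler3_antipode23r _ y (fun p m => S (x1 * p) * x2 * m * S x3)).
      by rewrite mulr1 mulrA.
    by multilinearity.
  by rewrite (@sweedler3_antipode23r _ x (fun p m => S (p * y) * m)) ?mulr1 //; multilinearity.
rewrite -contract -(@sweedler_coassoc _ x (fun x1 x2 x3 => Σ(y1 ⊗ y2 ⊗ y3 <- y)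
    S (x1 * y1) * (x2 * y2) * (S y3 * S x3))); last by multilinearity.
transitivity (Σ(p ⊗ x3 <- x) Σ(q ⊗ y3 <- y) (eps p * eps q) *: (S y3 * S x3)); last first.
  rewrite -(@sweedler_counitl _ x (fun z => S y * S z)); last by linearity.
  apply: eq_sweedler => p x3; rewrite -(@sweedler_counitl _ y (fun z => S z * S x3)).
    by rewrite scaler_sweedler; apply: eq_sweedler => q y3; rewrite scalerA.
  by linearity.
apply: eq_sweedler => p x3.
transitivity (Σ(x1 ⊗ x2 <- p) Σ(q ⊗ y3 <- y) Σ(y1 ⊗ y2 <- q)
    S (x1 * y1) * (x2 * y2) * (S y3 * S x3)).
  apply: eq_sweedler => x1 x2; rewrite (@sweedler_coassoc _ y
    (fun y1 y2 y3 => S (x1 * y1) * (x2 * y2) * (S y3 * S x3))) //; multilinearity.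
rewrite exchange_sweedler; apply: eq_sweedler => q y3.
rewrite -(@sweedlerM _ p q (fun m n => S m * n * (S y3 * S x3))); last by multilinearity.
rewrite -(@linear_sweedler _ _ (fun m n => S m * n) (fun z => z * (S y3 * S x3))).
  by rewrite antipodel epsM -scalerAl mul1r.
by linearity.
Qed.

Lemma antipodeK x : S (S x) = x.
Proof.
transitivity (Σ(a ⊗ b ⊗ c <- x) S (S a) * (S b * c)).
  by rewrite (@sweedler3_antipode23l _ x (fun p m => S (S p) * m)) ?mulr1 //; multilinearity.
transitivity (Σ(a ⊗ b ⊗ c <- x) S (b * S a) * c).
  by apply: eq_sweedler => a y; apply: eq_sweedler => b c; rewrite antipodeM mulrA.
rewrite (@sweedler3_swap12 _ x (fun a b c => S (b * S a) * c)); last by multilinearity.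
by rewrite (@sweedler3_antipode12r _ x (fun m c => S m * c)) ?antipode1 ?mul1r //; multilinearity.
Qed.

Lemma sweedler_antipode (V : lmodType K) a (f : A -> A -> V) : linear2 f ->
  Σ(p ⊗ q <- S a) f p q = Σ(x ⊗ y <- a) f (S x) (S y).
Proof.
move=> f_lin; have [f1 f2] := f_lin.
pose G a1 a2 a3 a4 := Σ(p ⊗ q <- S a1) Σ(r ⊗ s <- a2) f (p * (r * S a3)) (q * (s * S a4)).
have expand_rhs : Σ(a1 ⊗ a2 ⊗ a3 ⊗ a4 <- a) G a1 a2 a3 a4 = Σ(x ⊗ y <- a) f (S x) (S y).
  transitivity (Σ(a1 ⊗ a2 ⊗ a3 ⊗ a4 <- a)
      Σ(p ⊗ q <- S a1 * a2) f (p * S a3) (q * S a4)).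
    apply: eq_sweedler => a1 y; apply: eq_sweedler => a2 w; apply: eq_sweedler => a3 a4.
    rewrite sweedlerM; last by multilinearity.
    by apply: eq_sweedler => p q; apply: eq_sweedler => r s; rewrite !mulrA.
  rewrite (@sweedler3_antipode12l _ a
    (fun m w => Σ(a3 ⊗ a4 <- w) Σ(p ⊗ q <- m) f (p * S a3) (q * S a4))); last first.
    by multilinearity.
  by apply: eq_sweedler => x y; rewrite sweedler1 ?mul1r //; multilinearity.
rewrite -expand_rhs -(@sweedler_counitr _ a (fun z => Σ(p ⊗ q <- S z) f p q)); last first.
  by linearity.
apply: eq_sweedler => a1 y; rewrite scaler_sweedler /G.
transitivity (Σ(p ⊗ q <- S a1) Σ(a2 ⊗ w <- y) Σ(r ⊗ s <- a2) Σ(a3 ⊗ a4 <- w)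
    f (p * (r * S a3)) (q * (s * S a4))); last first.
  rewrite exchange_sweedler; apply: eq_sweedler => a2 w.
  rewrite [RHS]exchange_sweedler; apply: eq_sweedler => p q; exact: exchange_sweedler.
apply: eq_sweedler => p q.
rewrite (@sweedler_interchange _ y (fun r s a3 a4 => f (p * (r * S a3)) (q * (s * S a4))));
  last by multilinearity.
rewrite -(@sweedler_counitr _ y (fun x => eps x *: f p q)); last by linearity.
apply: eq_sweedler => x w; symmetry.
transitivity (Σ(r ⊗ a3 <- x) eps w *: f (p * (r * S a3)) q).
  apply: eq_sweedler => r a3.
  by rewrite (@sweedler_antipoder _ w (fun z => f (p * (r * S a3)) (q * z))) ?mulr1 //; linearity.
rewrite -scaler_sweedler (@sweedler_antipoder _ x (fun z => f (p * z) q)) ?mulr1 //.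
by linearity.
Qed.

(** * The adjoint action and the bracket *)

Local Notation ad a z := (Σ(x ⊗ y <- a) x * z * S y).
Local Notation "[~ x , y ]" := (Σ(p ⊗ q <- x) Σ(r ⊗ s <- y) p * r * S q * S s).

Lemma ad1 a : ad a 1 = eps a *: 1.
Proof. by under eq_sweedler do rewrite mulr1; exact: antipoder. Qed.

Lemma adM a x y : ad a (x * y) = Σ(u ⊗ v <- a) ad u x * ad v y.
Proof.
transitivity (Σ(p ⊗ q ⊗ r ⊗ s <- a) p * x * (S q * r) * y * S s).
  apply: eq_sweedler => p w.
  rewrite (@sweedler3_antipode12l _ w (fun m s => p * x * m * y * S s)); last first.
    by multilinearity.
  by rewrite mulr1 mulrA.
rewrite -(@sweedler4_split _ a (fun p q r s => p * x * (S q * r) * y * S s)); last first.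
  by multilinearity.
apply: eq_sweedler => u v; rewrite mulr_sweedlerl; apply: eq_sweedler => p q.
by rewrite mulr_sweedlerr; apply: eq_sweedler => r s; rewrite !mulrA.
Qed.

Lemma ad_antipode a x : ad a (S x) = S (ad a x).
Proof.
rewrite linear_sweedler // sweedlerC; last by multilinearity.
by apply: eq_sweedler => p q; rewrite !antipodeM antipodeK mulrA.
Qed.

Lemma sweedler_ad (V : lmodType K) a x (f : A -> A -> V) : linear2 f ->
  Σ(p ⊗ q <- ad a x) f p q = Σ(u ⊗ v <- a) Σ(p ⊗ q <- x) f (ad u p) (ad v q).
Proof.
move=> f_lin; have [f1 f2] := f_lin.
rewrite (@linear_sweedler _ a (fun s t => s * x * S t) (fun z => Σ(p ⊗ q <- z) f p q));
  last by linearity.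
transitivity (Σ(p ⊗ q <- x) Σ(s ⊗ t <- a) Σ(s1 ⊗ s2 <- s) Σ(t1 ⊗ t2 <- t)
    f (s1 * p * S t1) (s2 * q * S t2)).
  rewrite exchange_sweedler; apply: eq_sweedler => s t.
  rewrite !sweedlerM; try multilinearity.
  rewrite exchange_sweedler; apply: eq_sweedler => p q; apply: eq_sweedler => s1 s2.
  by rewrite sweedler_antipode //; multilinearity.
rewrite [RHS]exchange_sweedler; apply: eq_sweedler => p q.
rewrite (@sweedler_interchange _ a (fun s1 s2 t1 t2 => f (s1 * p * S t1) (s2 * q * S t2)));
  last by multilinearity.
apply: eq_sweedler => u v; rewrite (linear_sweedler _ _ (f1 _)).
by apply: eq_sweedler => u1 u2; rewrite (linear_sweedler _ _ (f2 _)).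
Qed.

Lemma adM4 a x y z w :
  ad a (x * y * z * w) = Σ(u1 ⊗ u2 ⊗ u3 ⊗ u4 <- a) ad u1 x * ad u2 y * ad u3 z * ad u4 w.
Proof.
have -> : x * y * z * w = x * (y * (z * w)) by rewrite !mulrA.
rewrite adM; apply: eq_sweedler => u1 v1; rewrite adM [LHS]mulr_sweedlerr.
apply: eq_sweedler => u2 v2; rewrite adM mulrA [LHS]mulr_sweedlerr.
by apply: eq_sweedler => u3 u4; rewrite !mulrA.
Qed.

Lemma ad_comm a x y : ad a [~ x, y] = Σ(u ⊗ v <- a) [~ ad u x, ad v y].
Proof.
transitivity (Σ(p ⊗ q <- x) Σ(r ⊗ s <- y) Σ(u ⊗ v <- a) Σ(u1 ⊗ u2 <- u) Σ(v1 ⊗ v2 <- v)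
    ad u1 p * ad v1 r * S (ad u2 q) * S (ad v2 s)).
  rewrite (@linear_sweedler _ x _ (fun z => ad a z)); last by linearity.
  apply: eq_sweedler => p q.
  rewrite (@linear_sweedler _ y _ (fun z => ad a z)); last by linearity.
  apply: eq_sweedler => r s; rewrite adM4 (@sweedler_interchange _ a
    (fun u1 u2 v1 v2 => ad u1 p * ad v1 r * S (ad u2 q) * S (ad v2 s))); last first.
    by multilinearity.
  rewrite sweedler4_split; last by multilinearity.
  apply: eq_sweedler => u1 w1; apply: eq_sweedler => u2 w2; apply: eq_sweedler => u3 u4.
  by rewrite !ad_antipode.
transitivity (Σ(u ⊗ v <- a) Σ(u1 ⊗ u2 <- u) Σ(p ⊗ q <- x) Σ(v1 ⊗ v2 <- v) Σ(r ⊗ s <- y)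
    ad u1 p * ad v1 r * S (ad u2 q) * S (ad v2 s)); last first.
  apply: eq_sweedler => u v; rewrite sweedler_ad; last by multilinearity.
  apply: eq_sweedler => u1 u2; apply: eq_sweedler => p q.
  by rewrite sweedler_ad //; multilinearity.
under eq_sweedler => p q do rewrite exchange_sweedler.
rewrite exchange_sweedler; apply: eq_sweedler => u v.
under eq_sweedler => p q do rewrite exchange_sweedler.
rewrite exchange_sweedler; apply: eq_sweedler => u1 u2; apply: eq_sweedler => p q.
exact: exchange_sweedler.
Qed.

Lemma antipode_comm x y : S [~ x, y] = [~ y, x].
Proof.
rewrite linear_sweedler //; under eq_sweedler => p q do rewrite linear_sweedler //.
rewrite sweedlerC; last by multilinearity.
rewrite exchange_sweedler sweedlerC; last by multilinearity.
apply: eq_sweedler => r s; apply: eq_sweedler => p q.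
by rewrite !antipodeM !antipodeK !mulrA.
Qed.

Lemma antipode_comm_ad x y : S [~ x, y] = Σ(x1 ⊗ x2 <- x) ad x2 [~ S x1, y].
Proof.
have commSE x1 : [~ S x1, y] = Σ(r ⊗ s <- y) Σ(p ⊗ q <- x1) S p * r * q * S s.
  rewrite sweedler_antipode; last by multilinearity.
  rewrite exchange_sweedler; apply: eq_sweedler => r s; apply: eq_sweedler => p q.
  by rewrite antipodeK.
rewrite antipode_comm; symmetry; under eq_sweedler => x1 x2 do rewrite commSE.
transitivity (Σ(x1 ⊗ x2 <- x) Σ(r ⊗ s <- y) Σ(p ⊗ q <- x1) ad x2 (S p * r * q * S s)).
  apply: eq_sweedler => x1 x2.
  rewrite (@linear_sweedler _ y _ (fun z => ad x2 z)); last by linearity.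
  apply: eq_sweedler => r s; rewrite (@linear_sweedler _ x1 _ (fun z => ad x2 z)) //.
  by linearity.
rewrite exchange_sweedler; apply: eq_sweedler => r s.
rewrite (@sweedler_interchange _ x (fun p q a b => a * (S p * r * q * S s) * S b));
  last by multilinearity.
rewrite -(@sweedler_counitl _ x (fun x2 => Σ(q ⊗ b <- x2) r * q * S s * S b)); last first.
  by linearity.
apply: eq_sweedler => x1 x2; rewrite sweedlerC; last by multilinearity.
transitivity (Σ(p ⊗ a <- x1) Σ(q ⊗ b <- x2) p * S a * r * q * S s * S b).
  by apply: eq_sweedler => p a; apply: eq_sweedler => q b; rewrite !mulrA.
rewrite (@sweedler_antipoder _ x1 (fun m => Σ(q ⊗ b <- x2) m * r * q * S s * S b)).
  by congr (_ *: _); apply: eq_sweedler => q b; rewrite mul1r.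
by linearity.
Qed.

Lemma sweedlerM_comm (V : lmodType K) x y z w (f : A -> A -> V) : linear2 f ->
  Σ(p ⊗ q <- x * y * S z * S w) f p q =
  Σ(x1 ⊗ x2 <- x) Σ(z1 ⊗ z2 <- z) Σ(y1 ⊗ y2 <- y) Σ(w1 ⊗ w2 <- w)
    f (x1 * y1 * S z1 * S w1) (x2 * y2 * S z2 * S w2).
Proof.
move=> f_lin; have [f1 f2] := f_lin.
rewrite sweedlerM; last by multilinearity.
rewrite sweedlerM; last by multilinearity.
rewrite sweedlerM; last by multilinearity.
apply: eq_sweedler => x1 x2; rewrite exchange_sweedler sweedler_antipode; last first.
  by multilinearity.
apply: eq_sweedler => z1 z2; apply: eq_sweedler => y1 y2.
by rewrite sweedler_antipode //; multilinearity.
Qed.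

Lemma sweedler_comm (V : lmodType K) a b (f : A -> A -> V) : linear2 f ->
  Σ(p ⊗ q <- [~ a, b]) f p q = Σ(a1 ⊗ a2 <- a) Σ(b1 ⊗ b2 <- b) f [~ a1, b1] [~ a2, b2].
Proof.
move=> f_lin; have [f1 f2] := f_lin.
pose G p1 p2 q1 q2 := Σ(u ⊗ v <- b) Σ(r1 ⊗ r2 <- u) Σ(t1 ⊗ t2 <- v)
  f (p1 * r1 * S q1 * S t1) (p2 * r2 * S q2 * S t2).
transitivity (Σ(u ⊗ v <- a) Σ(p1 ⊗ p2 <- u) Σ(q1 ⊗ q2 <- v) G p1 p2 q1 q2).
  rewrite (@linear_sweedler _ a _ (fun z => Σ(p ⊗ q <- z) f p q)); last by linearity.
  apply: eq_sweedler => u v.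
  rewrite (@linear_sweedler _ b _ (fun z => Σ(p ⊗ q <- z) f p q)); last by linearity.
  under eq_sweedler => u' v' do rewrite sweedlerM_comm //.
  rewrite exchange_sweedler; apply: eq_sweedler => p1 p2.
  by rewrite exchange_sweedler.
rewrite (@sweedler_interchange _ a G); last by rewrite /G; multilinearity.
apply: eq_sweedler => a1 a2.
have pullE b1 b2 : f [~ a1, b1] [~ a2, b2] = Σ(p1 ⊗ q1 <- a1) Σ(r1 ⊗ t1 <- b1)
    Σ(p2 ⊗ q2 <- a2) Σ(r2 ⊗ t2 <- b2) f (p1 * r1 * S q1 * S t1) (p2 * r2 * S q2 * S t2).
  rewrite (linear_sweedler _ _ (f1 _)); apply: eq_sweedler => p1 q1.
  rewrite (linear_sweedler _ _ (f1 _)); apply: eq_sweedler => r1 t1.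
  rewrite (linear_sweedler _ _ (f2 _)); apply: eq_sweedler => p2 q2.
  exact: (linear_sweedler _ _ (f2 _)).
under [RHS]eq_sweedler => b1 b2 do rewrite pullE.
rewrite [RHS]exchange_sweedler; apply: eq_sweedler => p1 q1.
under [RHS]eq_sweedler => b1 b2 do rewrite exchange_sweedler.
rewrite [RHS]exchange_sweedler; apply: eq_sweedler => p2 q2.
rewrite /G (@sweedler_interchange _ b (fun r1 r2 t1 t2 =>
  f (p1 * r1 * S q1 * S t1) (p2 * r2 * S q2 * S t2))) //.
by multilinearity.
Qed.

(** * The subalgebra [X, Y] *)

Definition coprod_in (D : A -> Prop) d :=
  exists s : seq (A * A), (forall p, p \in s -> D p.1 /\ D p.2) /\ teq2 (Delta d) s.

Lemma teq2_allpairs z x y sx sy (g h : A -> A -> A) :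
  teq2 (Delta x) sx -> teq2 (Delta y) sy -> linear2 g -> linear2 h ->
  (forall (V : lmodType K) (f : A -> A -> V), linear2 f ->
     Σ(p ⊗ q <- z) f p q = Σ(x1 ⊗ x2 <- x) Σ(y1 ⊗ y2 <- y) f (g x1 y1) (h x2 y2)) ->
  teq2 (Delta z) [seq (g p.1 q.1, h p.2 q.2) | p <- sx, q <- sy].
Proof.
move=> x_sx y_sy [g1 g2] [h1 h2] zE V f /bilinP f_lin; have [f1 f2] := f_lin.
rewrite big_allpairs_dep; have := zE V f f_lin; rewrite /sweedler => ->.
rewrite (x_sx V (fun x1 x2 => Σ(y1 ⊗ y2 <- y) f (g x1 y1) (h x2 y2))); last first.
  by apply/bilinP; multilinearity.
apply: eq_bigr => p _.
by apply: (y_sy V (fun y1 y2 => f (g p.1 y1) (h p.2 y2))); apply/bilinP; multilinearity.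
Qed.

Section Commutator.
Variables X Y : A -> Prop.
Hypothesis X_normal : is_normal_hopf_sub Delta S X.
Hypothesis Y_normal : is_normal_hopf_sub Delta S Y.

Local Notation XY := (hcomm Delta S X Y).

Lemma hcomm_subalg : is_subalg XY. Proof. exact: gen_subalg_subalg. Qed.

Lemma hcomm_gen x y : X x -> Y y -> XY [~ x, y].
Proof. by move=> Xx Yy; apply: gen_subalg_gen; exists x, y. Qed.

Lemma hcomm_ind (Q : A -> Prop) : is_subalg Q ->
  (forall x y, X x -> Y y -> Q [~ x, y]) -> forall d, XY d -> Q d.
Proof.
by move=> Q_subalg Q_gen d XYd; apply: XYd => // g [x [y [Xx [Yy ->]]]]; apply: Q_gen.
Qed.

Lemma hcomm_ad a d : XY d -> XY (ad a d).
Proof.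
have ad_lin b : linear (fun z => ad b z) by linearity.
have XY_subalg := hcomm_subalg.
move=> XYd; move: d XYd a; apply: (@hcomm_ind (fun d => forall a, XY (ad a d))).
  split; [|split; [|split]].
  - by move=> a; rewrite (linear0_of (ad_lin a)); exact: (subalg0 XY_subalg).
  - move=> k x y XYx XYy a; rewrite (ad_lin a).
    by apply: (subalgZD XY_subalg); [apply: XYx | apply: XYy].
  - by move=> a; rewrite ad1; apply: (subalgZ XY_subalg); apply: (subalg1 XY_subalg).
  - move=> x y XYx XYy a; rewrite adM; apply: subalg_sweedler => // u v.
    by apply: (subalgM XY_subalg); [apply: XYx | apply: XYy].
case: X_normal Y_normal => _ X_ad [_ Y_ad] x y Xx Yy a.
by rewrite ad_comm; apply: subalg_sweedler => // u v; apply: hcomm_gen; [apply: X_ad | apply: Y_ad].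
Qed.

Lemma hcomm_antipode d : XY d -> XY (S d).
Proof.
have XY_subalg := hcomm_subalg.
move=> XYd; move: d XYd; apply: (@hcomm_ind (fun d => XY (S d))).
  split; [|split; [|split]].
  - by rewrite (linear0_of S_linear); apply: (subalg0 XY_subalg).
  - by move=> k x y XYx XYy; rewrite S_linear; apply: (subalgZD XY_subalg).
  - by rewrite antipode1; apply: (subalg1 XY_subalg).
  - by move=> x y XYx XYy; rewrite antipodeM; apply: (subalgM XY_subalg).
case: X_normal => [[_ [X_coprod X_S]] _] x y Xx Yy.
have [sx [sxX x_sx]] := X_coprod x Xx.
rewrite antipode_comm_ad (sweedler_teq x_sx); last by multilinearity.
apply: (subalg_sum XY_subalg) => p /sxX [X1 X2].
by apply: hcomm_ad; apply: hcomm_gen => //; apply: X_S.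
Qed.

Lemma hcomm_coprod d : XY d -> coprod_in XY d.
Proof.
have XY_subalg := hcomm_subalg.
move=> XYd; move: d XYd; apply: (@hcomm_ind (coprod_in XY)).
  split; [|split; [|split]].
  - exists [::]; split=> // V f /bilinP f_lin; rewrite big_nil.
    exact: (linear0_of (linear_sweedler_arg f_lin)).
  - move=> k x y [sx [sxXY x_sx]] [sy [syXY y_sy]].
    exists ([seq (k *: p.1, p.2) | p <- sx] ++ sy); split.
      move=> p; rewrite mem_cat => /orP [/mapP [q /sxXY [XY1 XY2] ->] | /syXY //].
      by split=> //; apply: (subalgZ XY_subalg).
    move=> V f /bilinP f_lin; have [f1 f2] := f_lin.
    transitivity (k *: (Σ(p ⊗ q <- x) f p q) + Σ(p ⊗ q <- y) f p q).
      exact: (linear_sweedler_arg f_lin).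
    rewrite big_cat big_map (sweedler_teq x_sx) // (sweedler_teq y_sy) // scaler_sumr.
    by congr (_ + _); apply: eq_bigr => p _; rewrite /= (scalable_linear (f1 _)).
  - exists [:: (1, 1)]; split; last exact: Delta1.
    by move=> p; rewrite inE => /eqP ->; split; apply: (subalg1 XY_subalg).
  - move=> x y [sx [sxXY x_sx]] [sy [syXY y_sy]].
    exists [seq (p.1 * q.1, p.2 * q.2) | p <- sx, q <- sy]; split.
      move=> z /allpairsP [[p q] [/sxXY [XY1 XY2] /syXY [XY1' XY2'] ->]].
      by split; apply: (subalgM XY_subalg).
    apply: (teq2_allpairs x_sx y_sy); try by multilinearity.
    by move=> V f f_lin; apply: sweedlerM.
case: X_normal Y_normal => [[_ [X_coprod _]] _] [[_ [Y_coprod _]] _] x y Xx Yy.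
have [sx [sxX x_sx]] := X_coprod x Xx; have [sy [syY y_sy]] := Y_coprod y Yy.
exists [seq ([~ p.1, q.1], [~ p.2, q.2]) | p <- sx, q <- sy]; split.
  move=> z /allpairsP [[p q] [/sxX [X1 X2] /syY [Y1 Y2] ->]].
  by split; apply: hcomm_gen.
apply: (teq2_allpairs (g := fun a b => [~ a, b]) (h := fun a b => [~ a, b]) x_sx y_sy);
  try by multilinearity.
by move=> V f f_lin; apply: sweedler_comm.
Qed.

Lemma hcomm_normal_hopf_sub : is_normal_hopf_sub Delta S XY.
Proof.
split; last by move=> a d; apply: hcomm_ad.
by split; [exact: hcomm_subalg | split; [exact: hcomm_coprod | exact: hcomm_antipode]].
Qed.

End Commutator.

End HopfAlgebra.

Theorem proposition4p2 (K : fieldType) (A : algType K)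
  (Delta : A -> seq (A * A)) (eps : A -> K) (S : A -> A)
  (HA : is_hopf Delta eps S) (Hcoc : cocommutative Delta)
  (X Y : A -> Prop)
  (HX : is_normal_hopf_sub Delta S X) (HY : is_normal_hopf_sub Delta S Y) :
  is_normal_hopf_sub Delta S (hcomm Delta S X Y).
Proof.
case: HA => Delta_linear [coassoc [eps_scalar [counitl [counitr [DeltaM [Delta1
  [epsM [eps1 [S_linear [antipodel antipoder]]]]]]]]]].
exact: (hcomm_normal_hopf_sub Delta_linear eps_scalar S_linear coassoc counitl counitr
  DeltaM Delta1 epsM eps1 antipodel antipoder Hcoc HX HY).
Qed.
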